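(* Let $K$ be an abelian topological group which is compact or torsion, and $X$ a topological vector space over $\mathbf{C}$. Then $P(K,X)=P^0(K,X)$, i.e. every polynomial $p:K\to X$ is constant.
   Context: $\mathbf{Z}_+=\{0,1,2,\dots\}$. A group is torsion if every element has finite order. A continuous $p:K\to X$ is a polynomial of degree at most $n$ if for all $s,t\in K$ the map $m\mapsto p(s+mt)$, $m\in\mathbf{Z}_+$, is a polynomial in $m$ of degree at most $n$ with coefficients in $X$; $P^n(K,X)$ is the space of these and $P(K,X)=\bigcup_{n}P^n(K,X)$. *)

From HB Require Import structures.
From mathcomp Require Import all_boot all_order all_algebra.
From mathcomp Require Import all_classical all_reals all_analysis.
From mathcomp Require Import complex.
Set Implicit Arguments. Unset Strict Implicit. Unset Printing Implicit Defensive.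
Import Order.TTheory GRing.Theory Num.Theory.
Local Open Scope classical_set_scope.
Local Open Scope ring_scope.

Definition polys_le (K : topologicalZmodType) (F : numDomainType)
  (X : topologicalLmodType F) (n : nat) : set (K -> X) :=
  [set p | continuous p /\
     forall s t : K, exists c : 'I_n.+1 -> X,
       forall m : nat, p (s + t *+ m) = \sum_(k < n.+1) ((m%:R : F) ^+ k) *: c k].

Definition polys (K : topologicalZmodType) (F : numDomainType)
  (X : topologicalLmodType F) : set (K -> X) :=
  \bigcup_(n in [set: nat]) @polys_le K F X n.
Arguments polys_le K {F} X n.
Arguments polys K {F} X.

Definition torsion_group (K : zmodType) : Prop :=
  forall x : K, exists n : nat, (0 < n)%N /\ x *+ n = 0.

From HB Require Import structures.
From mathcomp Require Import all_boot all_order all_algebra.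
From mathcomp Require Import all_classical all_reals all_analysis.
From mathcomp Require Import complex.
Import Order.TTheory GRing.Theory Num.Theory.
Local Open Scope classical_set_scope.
Local Open Scope ring_scope.
Local Open Scope complex_scope.

(** For fixed [s] and [t], the orbit [m |-> p (s + t *+ m)] of a continuous
    [p] stays in a compact subset of [X]: the image [p K] if [K] is compact,
    a finite set if [t] has finite order.  A compact set is bounded, so
    [m^-n *: q m -> 0] for a polynomial [q] of degree [n] with values in it;
    since [m^-n *: q m] also tends to the leading coefficient of [q], that
    coefficient vanishes, and by induction [q] is constant. *)

Section TopologicalLmoduleConvergence.
Context {F : numFieldType} {X : topologicalLmodType F}.
Context {T : Type} {G : set_system T} {FG : Filter G}.

Lemma tmod_cvgD {f g : T -> X} {a b : X} :
  f @ G --> a -> g @ G --> b -> (fun x => f x + g x) @ G --> a + b.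
Proof.
apply: (@continuous2_cvg _ _ _ _ _ _ _ _ (fun x y => x + y)).
exact: (@add_continuous X (a, b)).
Qed.

Lemma tmod_cvgZ {s : T -> F^o} {f : T -> X} {k : F^o} {a : X} :
  s @ G --> k -> f @ G --> a -> (fun x => s x *: f x) @ G --> k *: a.
Proof.
apply: (@continuous2_cvg _ F^o X X G _ s f (fun x y => x *: y)).
exact: (@scale_continuous F X (k, a)).
Qed.

Lemma tmod_cvg_sum0 n (f : 'I_n -> T -> X) :
  (forall k, f k @ G --> 0) -> (fun x => \sum_(k < n) f k x) @ G --> 0.
Proof.
elim: n f => [|n IHn] f f0.
  by under eq_fun do rewrite big_ord0; exact: cvg_cst.
under eq_fun do rewrite big_ord_recr /=.
have f0_low := IHn (fun k => f (widen_ord (leqnSn n) k)) (fun k => f0 _).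
by have := tmod_cvgD f0_low (f0 ord_max); rewrite addr0; apply.
Qed.

End TopologicalLmoduleConvergence.

Lemma compact_scale_near0 {F : numFieldType} {X : topologicalLmodType F}
    {A W : set X} :
  compact A -> nbhs 0 W -> \forall r \near (0 : F^o), forall x, A x -> W (r *: x).
Proof.
move=> /compact_near_coveringP cA W0.
suff : \forall r \near (0 : F^o), A `<=` (fun x => W (r *: x)).
  by apply: filterS => r AW x /AW.
apply: (cA _ (nbhs (0 : F^o)) (fun r x => W (r *: x))) => x Ax.
have := @scale_continuous F X (0, x) W; rewrite /= scale0r => /(_ W0).
case=> -[B1 B2] /= [B1_0 B2_x] B12W.
by exists (B2, B1) => // -[y r] [/= B2y B1r]; exact: (B12W (r, y)).
Qed.

Definition poly_nat {F : pzRingType} {X : lmodType F} {n} (c : 'I_n -> X)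
    (m : nat) : X :=
  \sum_(k < n) ((m%:R : F) ^+ k) *: c k.

Lemma poly_nat_scale_inv (F : numFieldType) (X : lmodType F) n
    (c : 'I_n.+2 -> X) (m : nat) : (0 < m)%N ->
  (m%:R : F)^-1 ^+ n.+1 *: poly_nat c m =
  c ord_max +
  \sum_(k < n.+1) (m%:R : F)^-1 ^+ (n.+1 - k) *: c (widen_ord (leqnSn _) k).
Proof.
move=> m_gt0.
have mV k : (k <= n.+1)%N ->
    (m%:R : F)^-1 ^+ n.+1 * (m%:R : F) ^+ k = (m%:R : F)^-1 ^+ (n.+1 - k).
  move=> le_kn; rewrite -{1}(subnK le_kn) exprD -mulrA -exprMn.
  by rewrite mulVf ?pnatr_eq0 -?lt0n // expr1n mulr1.
rewrite /poly_nat big_ord_recr /= scalerDr scalerA mV // subnn expr0 scale1r.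
rewrite addrC scaler_sumr; congr (_ + _); apply: eq_bigr => k _.
by rewrite scalerA mV // ltnW.
Qed.

Section BoundedPolynomials.
Context {F : numFieldType} {X : topologicalLmodType F}.
(* False in non-archimedean fields; holds in [R[i]] (see [inv_natr_complex_cvg0]). *)
Hypothesis inv_natr_cvg0 : (fun m : nat => (m%:R : F^o)^-1) @ \oo --> 0.
Hypothesis hX : hausdorff_space X.
Context {A : set X}.
Hypothesis cA : compact A.

Lemma exp_inv_natr_cvg0 {j} : (0 < j)%N ->
  (fun m : nat => (m%:R : F^o)^-1 ^+ j) @ \oo --> 0.
Proof.
elim: j => // -[|j] IHj _.
  by under eq_fun do rewrite expr1; exact: inv_natr_cvg0.
under eq_fun do rewrite exprS.
by rewrite -(mulr0 (0 : F^o)); exact: cvgM inv_natr_cvg0 (IHj isT).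
Qed.

Lemma poly_nat_lead_coef0 n (c : 'I_n.+2 -> X) :
  (forall m, A (poly_nat c m)) -> c ord_max = 0.
Proof.
move=> Aq; pose u m := (m%:R : F^o)^-1.
have to0 : (fun m => u m ^+ n.+1 *: poly_nat c m) @ \oo --> 0.
  move=> W /(compact_scale_near0 cA) AW.
  have AW_near : \forall m \near \oo, forall x, A x -> W (u m ^+ n.+1 *: x).
    exact: exp_inv_natr_cvg0 (ltn0Sn n) _ AW.
  by apply: filterS AW_near => m; apply.
pose lower m := \sum_(k < n.+1) u m ^+ (n.+1 - k) *: c (widen_ord (leqnSn _) k).
have lower0 : lower @ \oo --> 0.
  apply: tmod_cvg_sum0 => k.
  have k_lt : (0 < n.+1 - k)%N by rewrite subn_gt0.
  have := tmod_cvgZ (exp_inv_natr_cvg0 k_lt) (cvg_cst (c (widen_ord (leqnSn _) k))).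
  by rewrite scale0r; apply.
have expand : {near \oo, (fun m => c ord_max + lower m) =1
                          (fun m => u m ^+ n.+1 *: poly_nat c m)}.
  by near=> m; rewrite /u poly_nat_scale_inv //; near: m; exists 1%N.
have to_lead : (fun m => u m ^+ n.+1 *: poly_nat c m) @ \oo --> c ord_max.
  have lim_sum : (fun m => c ord_max + lower m) @ \oo --> c ord_max + 0.
    exact: tmod_cvgD (cvg_cst _) lower0.
  rewrite addr0 in lim_sum; apply: cvg_trans lim_sum; exact: near_eq_cvg expand.
exact: (cvg_unique hX to_lead to0).
Unshelve. all: by end_near.
Qed.

Lemma poly_nat_const n (c : 'I_n.+1 -> X) :
  (forall m, A (poly_nat c m)) -> forall m, poly_nat c m = c ord0.
Proof.
elim: n c => [|n IHn] c Aq m; first by rewrite /poly_nat big_ord1 expr0 scale1r.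
have drop_lead m' : poly_nat c m' = poly_nat (c \o widen_ord (leqnSn _)) m'.
  by rewrite /poly_nat big_ord_recr /= poly_nat_lead_coef0 // scaler0 addr0.
rewrite drop_lead IHn /=; first by congr c; exact: val_inj.
by move=> m'; rewrite -drop_lead.
Qed.

End BoundedPolynomials.

Lemma inv_natr_complex_cvg0 (R : realType) :
  (fun m : nat => (m%:R : R[i]^o)^-1) @ \oo --> 0.
Proof.
apply/cvgr0Pnorm_lt => e; rewrite ltcE /= => /andP[/eqP Ime Ree_gt0].
have /cvgr0Pnorm_lt /(_ _ Ree_gt0) [N _ HN] := @cvg_harmonic R.
exists N.+1 => // -[|m] //= /HN; rewrite /harmonic /= ger0_norm ?invr_ge0 //.
rewrite normfV normr_nat -(rmorph_nat (real_complex R)).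
by rewrite -(fmorphV (real_complex R)) ltcE /= -Ime eqxx.
Qed.

Lemma mulrn_modn (V : zmodType) (t : V) N m : t *+ N = 0 -> t *+ m = t *+ (m %% N).
Proof. by move=> tN; rewrite {1}(divn_eq m N) mulrnDr mulnC mulrnA tN mul0rn add0r. Qed.

Lemma compact_orbit {K : topologicalZmodType} {Y : topologicalType} {p : K -> Y} :
  continuous p -> compact [set: K] \/ torsion_group K ->
  forall s t : K, exists2 A : set Y, compact A & forall m, A (p (s + t *+ m)).
Proof.
move=> pc [cK|tK] s t.
  exists (p @` setT); last by move=> m; exists (s + t *+ m).
  by apply: continuous_compact cK; exact: continuous_subspaceT.
have [N [N_gt0 tN]] := tK t.
exists ((fun m => p (s + t *+ m)) @` `I_N).
  exact/finite_compact/finite_image/finite_II.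
by move=> m; exists (m %% N)%N; rewrite /= ?ltn_pmod // -mulrn_modn.
Qed.

Theorem lemma2p4 (R : realType) (K : topologicalZmodType)
  (X : topologicalLmodType R[i]) :
  hausdorff_space X ->
  compact [set: K] \/ torsion_group K ->
  polys K X = polys_le K X 0.
Proof.
move=> hX hK; apply/seteqP; split => [p [n _ [pc pn]]|p p0]; last by exists 0%N.
split=> // s t; have [c qc] := pn s t.
have [A cA Aorb] := compact_orbit pc hK s t.
exists (fun=> c ord0) => m; rewrite big_ord1 expr0 scale1r qc.
apply: (poly_nat_const (inv_natr_complex_cvg0 R) hX cA) => m'.
by rewrite /poly_nat -qc.
Qed.
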